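(* Let $k\ne\ell$ be in $\{1,\dots,r\}$. (a) If $(\bm n;\bm m),(\bm n+\bm e_k;\bm m),(\bm n+\bm e_\ell;\bm m)\in\mathfrak C_{2r}$ are normal, then there is a complex number $\gamma^{k\ell}_{\bm n;\bm m}$ with $\Phi_{\bm n+\bm e_k;\bm m}-\Phi_{\bm n+\bm e_\ell;\bm m}=\gamma^{k\ell}_{\bm n;\bm m}\Phi_{\bm n;\bm m}$. (b) If $(\bm n-\bm e_k-\bm e_\ell;\bm m),(\bm n-\bm e_k;\bm m),(\bm n-\bm e_\ell;\bm m),(\bm n;\bm m)\in\mathfrak C_{2r}$ are normal, then $\bm\Xi_{\bm n-\bm e_k;\bm m}-\bm\Xi_{\bm n-\bm e_\ell;\bm m}=\gamma^{k\ell}_{\bm n-\bm e_k-\bm e_\ell;\bm m}\bm\Xi_{\bm n;\bm m}$, where $\gamma^{k\ell}_{\bm n-\bm e_k-\bm e_\ell;\bm m}$ is the number from (a) for the index $(\bm n-\bm e_k-\bm e_\ell;\bm m)$. (c) If $(\bm n;\bm m),(\bm n;\bm m+\bm e_k),(\bm n;\bm m+\bm e_\ell)\in\mathfrak C_{2r}$ are normal, then there is a complex number $\eta^{k\ell}_{\bm n;\bm m}$ with $\Phi^*_{\bm n;\bm m+\bm e_k}-\Phi^*_{\bm n;\bm m+\bm e_\ell}=\eta^{k\ell}_{\bm n;\bm m}\Phi^*_{\bm n;\bm m}$. (d) If $(\bm n;\bm m-\bm e_k-\bm e_\ell),(\bm n;\bm m-\bm e_k),(\bm n;\bm m-\bm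 e_\ell),(\bm n;\bm m)\in\mathfrak C_{2r}$ are normal, then $\bm\Xi^*_{\bm n;\bm m-\bm e_k}-\bm\Xi^*_{\bm n;\bm m-\bm e_\ell}=\eta^{k\ell}_{\bm n;\bm m-\bm e_k-\bm e_\ell}\bm\Xi^*_{\bm n;\bm m}$, where $\eta^{k\ell}_{\bm n;\bm m-\bm e_k-\bm e_\ell}$ is the number from (c) for the index $(\bm n;\bm m-\bm e_k-\bm e_\ell)$.
   Context: Fix $r\ge1$; $\bm e_j$ is the $j$-th standard unit vector of $\mathbb Z^r$; for $\bm v\in\mathbb Z^r$, $|\bm v|=v_1+\dots+v_r$ (signed). Let $c_{k,j}\in\mathbb C$ ($k\in\mathbb Z$, $1\le j\le r$) and let $L_j$ be the linear functional on complex Laurent polynomials with $L_j[w^{-k}]=c_{k,j}$. $\mathfrak C_{2r}=\{(\bm n;\bm m)\in\mathbb Z^r\times\mathbb Z^r:n_j+m_j\ge0\ \forall j\}$. For $(\bm n;\bm m)\in\mathfrak C_{2r}$, $\bm n\ne-\bm m$, let $T_{\bm n;\bm m}$ be the square matrix of size $|\bm n|+|\bm m|$ with rows indexed by pairs $(j,k)$, $1\le j\le r$, $-m_j\le k\le n_j-1$ (ordered by $j$, then increasing $k$), columns indexed by $i=-|\bm m|,\dots,|\bm n|-1$, entries $c_{k-i,j}$; $T_{\bm n;-\bm n}:=1$. $(\bm n;\bm m)$ is normal if $\det T_{\bm n;\bm m}\ne0$. For normal $(\bm n;\bm m)$, $\bm n\ne-\bm m$: $\Phi_{\bm n;\bm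 m}$ is the unique Laurent polynomial in $\operatorname{span}\{z^k\}_{k=-|\bm m|}^{|\bm n|}$ with $z^{|\bm n|}$-coefficient $1$ and $L_j[\Phi_{\bm n;\bm m}(w)w^{-k}]=0$ for $-m_j\le k\le n_j-1$, all $j$; $\Phi^*_{\bm n;\bm m}$ is the unique one in that span with $z^{-|\bm m|}$-coefficient $1$ and $L_j[\Phi^*_{\bm n;\bm m}(w)w^{-k}]=0$ for $-m_j+1\le k\le n_j$, all $j$; $\bm\Xi_{\bm n;\bm m}=(\Xi_{\bm n;\bm m,j})_{j=1}^r$ is the unique vector with $\Xi_{\bm n;\bm m,j}\in\operatorname{span}\{z^k\}_{k=-n_j}^{m_j-1}$, $\sum_jL_j[\Xi_{\bm n;\bm m,j}(w)w^{-k}]=0$ for $-|\bm n|+1\le k\le|\bm m|-1$ and $=1$ for $k=-|\bm n|$; $\bm\Xi^*_{\bm n;\bm m}$ is the unique vector with $\Xi^*_{\bm n;\bm m,j}\in\operatorname{span}\{z^k\}_{k=-n_j+1}^{m_j}$, the same vanishing conditions, and $=1$ for $k=|\bm m|$. For $\bm n=-\bm m$: $\Phi=\Phi^*=1$, $\bm\Xi=\bm\Xi^*=\bm0$. *)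

From mathcomp Require Import all_boot all_order all_algebra.
From mathcomp Require Import reals complex.
Set Implicit Arguments. Unset Strict Implicit. Unset Printing Implicit Defensive.
Import Order.TTheory GRing.Theory Num.Theory.
Local Open Scope ring_scope.

Section MOP.
Variables (R : realType) (r : nat).
Local Notation C := (R[i]).

Definition mi := 'I_r -> int.
Definition msum (v : mi) : int := \sum_(j < r) v j.
Definition ev (k : 'I_r) : mi := fun j => (j == k)%:Z.
Definition madd (v w : mi) : mi := fun j => v j + w j.
Definition msub (v w : mi) : mi := fun j => v j - w j.

Definition inC2r (n m : mi) : Prop := forall j, 0 <= n j + m j.

(* Coefficients c_{k,j}; L_j[w^{-k}] = c k j. *)
Definition coefs := int -> 'I_r -> C.

(* Laurent polynomials are represented by their coefficient functions
   p : int -> C (p i = coefficient of z^i); "p in span{z^k}_{k=a}^{b}". *)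
Definition in_span (a b : int) (p : int -> C) : Prop :=
  forall i, i < a \/ b < i -> p i = 0.

(* For p supported in the window {a, ..., a + len - 1}:
   L_j[p(w) w^{-k}] = sum_i p_i L_j[w^{-(k-i)}] = sum_i p_i c_{k-i,j}. *)
Definition Lwin (c : coefs) (j : 'I_r) (a : int) (len : nat) (p : int -> C)
    (k : int) : C :=
  \sum_(t < len) p (a + t%:Z) * c (k - (a + t%:Z)) j.

(* Rows of T_{n;m}: pairs (j,k), 1<=j<=r, -m_j <= k <= n_j - 1, ordered by j
   then increasing k; each row is stored as the function i |-> c_{k-i,j}. *)
Definition Trows (c : coefs) (n m : mi) : seq (int -> C) :=
  flatten [seq [seq (fun i => c ((- m j + t%:Z) - i) j)
               | t <- iota 0 (absz (n j + m j))] | j <- enum 'I_r].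

Definition Tsize (n m : mi) : nat := absz (msum n + msum m).

(* T_{n;m}: columns indexed by i = -|m|, ..., |n|-1.  For n = -m this is the
   empty 0x0 matrix, whose determinant is 1 (matching T_{n;-n} := 1). *)
Definition Tmat (c : coefs) (n m : mi) : 'M[C]_(Tsize n m) :=
  \matrix_(a, b) nth (fun _ => 0) (Trows c n m) a (- msum m + (b : nat)%:Z).

Definition normal (c : coefs) (n m : mi) : Prop := \det (Tmat c n m) != 0.

Definition is_Phi (c : coefs) (n m : mi) (P : int -> C) : Prop :=
  [/\ in_span (- msum m) (msum n) P, P (msum n) = 1 &
      forall j k, - m j <= k <= n j - 1 ->
        Lwin c j (- msum m) (Tsize n m).+1 P k = 0].

Definition is_Phistar (c : coefs) (n m : mi) (P : int -> C) : Prop :=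
  [/\ in_span (- msum m) (msum n) P, P (- msum m) = 1 &
      forall j k, - m j + 1 <= k <= n j ->
        Lwin c j (- msum m) (Tsize n m).+1 P k = 0].

(* sum_j L_j[X_j(w) w^{-k}] for X_j supported in {a_j, ..., a_j + n_j + m_j - 1} *)
Definition Lvec (c : coefs) (n m : mi) (a : 'I_r -> int) (X : 'I_r -> int -> C)
    (k : int) : C :=
  \sum_(j < r) Lwin c j (a j) (absz (n j + m j)) (X j) k.

Definition is_Xi (c : coefs) (n m : mi) (X : 'I_r -> int -> C) : Prop :=
  ((forall j, n j + m j = 0) -> forall j i, X j i = 0) /\
  (~ (forall j, n j + m j = 0) ->
   [/\ forall j, in_span (- n j) (m j - 1) (X j),
       forall k, - msum n + 1 <= k <= msum m - 1 ->
         Lvec c n m (fun j => - n j) X k = 0 &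
       Lvec c n m (fun j => - n j) X (- msum n) = 1]).

Definition is_Xistar (c : coefs) (n m : mi) (X : 'I_r -> int -> C) : Prop :=
  ((forall j, n j + m j = 0) -> forall j i, X j i = 0) /\
  (~ (forall j, n j + m j = 0) ->
   [/\ forall j, in_span (- n j + 1) (m j) (X j),
       forall k, - msum n + 1 <= k <= msum m - 1 ->
         Lvec c n m (fun j => - n j + 1) X k = 0 &
       Lvec c n m (fun j => - n j + 1) X (msum m) = 1]).

End MOP.

(* Normality of (n;m) makes T_{n;m} invertible: a Laurent polynomial in
   span{z^k}_{k=-|m|}^{|n|-1} annihilated by the functionals defining Phi_{n;m}
   is zero, and so is a vector annihilated by the functionals defining Xi_{n;m}
   (the transposed system).  In (a), Phi_{n+e_k;m} - Phi_{n+e_l;m} - gamma Phi_{n;m}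
   is such a polynomial once gamma kills its z^{|n|} coefficient; (c) is the same
   after division by z.  In (b), pairing Phi with Xi shows that the functional
   just below the normalising one of Xi_{n;m} takes the value -Phi_{n;m}(|n|-1)
   on Xi_{n;m}.  Hence the normalising functional of Xi_{n;m} takes the value
   gamma on Xi_{n-e_k;m} - Xi_{n-e_l;m}, and this difference minus gamma Xi_{n;m}
   is annihilated by all the functionals defining Xi_{n;m}.  (d) is the mirror
   image of (b). *)

From mathcomp Require Import all_boot all_order all_algebra.
From mathcomp Require Import reals complex zify ring.
Import Order.TTheory GRing.Theory Num.Theory.
Local Open Scope ring_scope.
Set Implicit Arguments. Unset Strict Implicit. Unset Printing Implicit Defensive.

Section Windows.
Variable R : realType.
Local Notation C := (R[i]).

Definition zwin (a : int) (len : nat) : seq int := [seq a + t%:Z | t <- iota 0 len].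

Lemma mem_zwin a len i : (i \in zwin a len) = (a <= i) && (i < a + len%:Z).
Proof.
apply/mapP/idP => [[t] | /andP[ai ilen]].
  by rewrite mem_iota => /andP[_ ht] ->; apply/andP; split; lia.
by exists (absz (i - a)); [rewrite mem_iota; apply/andP; split | ]; lia.
Qed.

Lemma uniq_zwin a len : uniq (zwin a len).
Proof. by rewrite map_inj_uniq ?iota_uniq // => x y /addrI []. Qed.

Lemma big_support_eq (f : int -> C) (s1 s2 : seq int) : uniq s1 -> uniq s2 ->
    (forall i, f i != 0 -> i \in s1) -> (forall i, f i != 0 -> i \in s2) ->
  \sum_(i <- s1) f i = \sum_(i <- s2) f i.
Proof.
move=> u1 u2 s1f s2f; apply/perm_big_supp/uniq_perm; rewrite ?filter_uniq // => i.
by rewrite !mem_filter; case: eqP => //= /eqP fi; rewrite s1f ?s2f.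
Qed.

Lemma in_span_bounds (a b : int) (p : int -> C) i :
  in_span a b p -> p i != 0 -> a <= i <= b.
Proof.
move=> sp; apply: contraNT; rewrite negb_and -!ltNge => /orP ib.
by apply/eqP/sp; case: ib; [left | right].
Qed.

Lemma in_span_eq0 (a b : int) (p : int -> C) :
  in_span a b p -> (forall i, a <= i <= b -> p i = 0) -> forall i, p i = 0.
Proof. by move=> sp p0 i; case: (eqVneq (p i) 0) => // /(in_span_bounds sp); apply: p0. Qed.

Lemma in_span_widen (a b a' b' : int) (p : int -> C) :
  a' <= a -> b <= b' -> in_span a b p -> in_span a' b' p.
Proof. by move=> aa bb sp i ib; apply: sp; case: ib => ?; [left | right]; lia. Qed.

Lemma in_span_lincomb (a b : int) (p q u : int -> C) g :
    in_span a b p -> in_span a b q -> in_span a b u ->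
  in_span a b (fun i => p i - q i - g * u i).
Proof. by move=> sp sq su i ib; rewrite sp // sq // su // mulr0 !subr0. Qed.

Lemma in_span_shift (a b : int) (p : int -> C) :
  in_span a b p -> in_span (a - 1) (b - 1) (fun i => p (i + 1)).
Proof. by move=> sp i ib; apply: sp; case: ib => ?; [left | right]; lia. Qed.

Variables (r : nat) (c : coefs R r).

Lemma LwinE j a len (p : int -> C) k :
  Lwin c j a len p k = \sum_(i <- zwin a len) p i * c (k - i) j.
Proof.
rewrite /Lwin /zwin big_map.
by rewrite -(big_mkord xpredT (fun t => p (a + t%:Z) * c (k - (a + t%:Z)) j))
  /index_iota subn0.
Qed.

Lemma Lwin_window j a len a' len' (p : int -> C) k lo hi :
    in_span lo hi p -> a <= lo -> hi < a + len%:Z -> a' <= lo -> hi < a' + len'%:Z ->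
  Lwin c j a len p k = Lwin c j a' len' p k.
Proof.
move=> sp *; rewrite !LwinE; apply: big_support_eq; rewrite ?uniq_zwin // => i;
  by rewrite mulf_eq0 negb_or => /andP[/(in_span_bounds sp) ? _]; rewrite mem_zwin; lia.
Qed.

Lemma Lwin_lincomb j a len (p q u : int -> C) g k :
  Lwin c j a len (fun i => p i - q i - g * u i) k =
  Lwin c j a len p k - Lwin c j a len q k - g * Lwin c j a len u k.
Proof.
by rewrite /Lwin mulr_sumr -!sumrB; apply: eq_bigr => t _; rewrite !mulrBl mulrA.
Qed.

Lemma Lwin_shift j a len (p : int -> C) k :
  Lwin c j a len (fun i => p (i + 1)) k = Lwin c j (a + 1) len p (k + 1).
Proof. by apply: eq_bigr => t _; congr (p _ * c _ j); lia. Qed.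

Lemma Lvec_lincomb (n m : mi r) a (X Y Z : 'I_r -> int -> C) g k :
  Lvec c n m a (fun j i => X j i - Y j i - g * Z j i) k =
  Lvec c n m a X k - Lvec c n m a Y k - g * Lvec c n m a Z k.
Proof.
by rewrite /Lvec mulr_sumr -!sumrB; apply: eq_bigr => j _; apply: Lwin_lincomb.
Qed.

Lemma Lvec_shift (n m : mi r) a (X : 'I_r -> int -> C) k :
  Lvec c n m a (fun j i => X j (i + 1)) k = Lvec c n m (fun j => a j + 1) X (k + 1).
Proof. by apply: eq_bigr => j _; rewrite Lwin_shift. Qed.

Lemma Lvec_window (n m n' m' : mi r) a a' (X : 'I_r -> int -> C) k
    (lo hi : 'I_r -> int) :
    (forall j, in_span (lo j) (hi j) (X j)) ->
    inC2r n m -> inC2r n' m' ->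
    (forall j, a j <= lo j /\ hi j < a j + (n j + m j)) ->
    (forall j, a' j <= lo j /\ hi j < a' j + (n' j + m' j)) ->
  Lvec c n m a X k = Lvec c n' m' a' X k.
Proof.
move=> sp nm nm' w w'; apply: eq_bigr => j _.
have [? ?] := w j; have [? ?] := w' j.
by apply: (Lwin_window _ _ (sp j)); rewrite ?gez0_abs ?nm ?nm'.
Qed.

Lemma sum_mul_Lvec (P : int -> C) a len (n m : mi r) b (X : 'I_r -> int -> C) k0 :
  \sum_(i <- zwin a len) P i * Lvec c n m b X (k0 - i) =
  \sum_(j < r) \sum_(s <- zwin (b j) (absz (n j + m j))) X j s * Lwin c j a len P (k0 - s).
Proof.
under eq_bigr do rewrite mulr_sumr.
rewrite exchange_big; apply: eq_bigr => j _.
under eq_bigr do rewrite LwinE mulr_sumr.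
rewrite exchange_big; apply: eq_bigr => s _.
rewrite LwinE mulr_sumr; apply: eq_bigr => i _.
by rewrite mulrCA; congr (_ * (_ * c _ _)); lia.
Qed.

End Windows.

Section Toeplitz.
Variables (R : realType) (r : nat) (c : coefs R r).
Local Notation C := (R[i]).

Lemma sum_ev (k : 'I_r) : \sum_(j < r) ev k j = 1.
Proof.
by rewrite (bigD1 k) //= big1 ?addr0 => [|j /negPf]; rewrite /ev ?eqxx // => ->.
Qed.

Lemma msum_madd_ev (n : mi r) k : msum (madd n (ev k)) = msum n + 1.
Proof. by rewrite /msum big_split /= sum_ev. Qed.

Lemma msum_msub_ev (n : mi r) k : msum (msub n (ev k)) = msum n - 1.
Proof. by rewrite /msum big_split /= sumrN sum_ev. Qed.

Lemma ev_bounds (k j : 'I_r) : 0 <= ev k j <= 1.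
Proof. by rewrite /ev; case: (j == k). Qed.

Lemma msub_ev2_madd_l (n : mi r) k l :
  madd (msub (msub n (ev k)) (ev l)) (ev k) = msub n (ev l).
Proof. by apply: boolp.funext => j; rewrite /madd /msub; lia. Qed.

Lemma msub_ev2_madd_r (n : mi r) k l :
  madd (msub (msub n (ev k)) (ev l)) (ev l) = msub n (ev k).
Proof. by apply: boolp.funext => j; rewrite /madd /msub; lia. Qed.

Lemma TsizeE (n m : mi r) : inC2r n m -> (Tsize n m)%:Z = msum n + msum m.
Proof.
move=> nm; rewrite /Tsize gez0_abs // /msum -big_split /=.
by apply: sumr_ge0 => j _; apply: nm.
Qed.

Definition Tindex (n m : mi r) : seq ('I_r * nat) :=
  flatten [seq [seq (j, t) | t <- iota 0 (absz (n j + m j))] | j <- enum 'I_r].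

Definition Trow (m : mi r) (jt : 'I_r * nat) : int -> C :=
  fun i => c ((- m jt.1 + (jt.2)%:Z) - i) jt.1.

Lemma size_Tindex (n m : mi r) : inC2r n m -> size (Tindex n m) = Tsize n m.
Proof.
move=> nm; apply/eqP; rewrite -eqz_nat TsizeE // size_flatten sumnE /shape.
rewrite big_map big_map big_enum /= (big_morph _ PoszD (erefl 0%:Z)) /msum -big_split /=.
by apply/eqP/eq_bigr => j _; rewrite size_map size_iota gez0_abs ?nm.
Qed.

Lemma mem_Tindex (n m : mi r) j t :
  ((j, t) \in Tindex n m) = (t < absz (n j + m j)%R)%N.
Proof.
apply/flatten_mapP/idP => [[j' _ /mapP[t' + [-> ->]]] | lt_t].
  by rewrite mem_iota.
by exists j; rewrite ?mem_enum //; apply/mapP; exists t; rewrite ?mem_iota.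
Qed.

Lemma TmatE (x0 : 'I_r) (n m : mi r) (a b : 'I_(Tsize n m)) : inC2r n m ->
  Tmat c n m a b = Trow m (nth (x0, 0%N) (Tindex n m) a) (- msum m + (b : nat)%:Z).
Proof.
move=> nm; rewrite mxE (_ : Trows c n m = map (Trow m) (Tindex n m)).
  by rewrite (nth_map (x0, 0%N)) // size_Tindex.
rewrite /Trows /Tindex map_flatten -map_comp; congr flatten.
by apply: eq_map => j /=; rewrite -map_comp.
Qed.

End Toeplitz.

Section Kernels.
Variables (R : realType) (r : nat) (c : coefs R r) (x0 : 'I_r).
Local Notation C := (R[i]).

Lemma Tmat_unit (n m : mi r) : normal c n m -> Tmat c n m \in unitmx.
Proof. by rewrite unitmxE unitfE. Qed.

Lemma normal_annihilated_poly_eq0 (n m : mi r) (Q : int -> C) :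
    inC2r n m -> normal c n m -> in_span (- msum m) (msum n - 1) Q ->
    (forall j k, - m j <= k <= n j - 1 -> Lwin c j (- msum m) (Tsize n m) Q k = 0) ->
  forall i, Q i = 0.
Proof.
move=> nm /Tmat_unit unitT sp orth.
pose v : 'cV[C]_(Tsize n m) := \col_b Q (- msum m + (b : nat)%:Z).
have Tv : Tmat c n m *m v = 0.
  apply/matrixP => a i0; rewrite !mxE.
  under eq_bigr do rewrite (TmatE c x0) // mxE.
  have : nth (x0, 0%N) (Tindex n m) a \in Tindex n m by rewrite mem_nth ?size_Tindex.
  case: nth => j t; rewrite mem_Tindex => lt_t.
  rewrite -[RHS](orth j (- m j + t%:Z)); last by move: (nm j); lia.
  by apply: eq_bigr => b _; rewrite mulrC.
have v0 : v = 0 by rewrite -(mulKmx unitT v) Tv mulmx0.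
apply: in_span_eq0 sp _ => i /andP[lo hi].
have lt_b : (absz (i + msum m)%R < Tsize n m)%N by have := TsizeE nm; lia.
have := congr1 (fun M : 'cV_(Tsize n m) => M (Ordinal lt_b) 0) v0; rewrite !mxE /=.
by have -> : - msum m + (absz (i + msum m)%R)%:Z = i by lia.
Qed.

(* The conditions defining Xi_{n;m} form the transposed system of T_{n;m}, the
   unknown attached to row (j, t) being X_j(m_j - 1 - t). *)
Definition Tcoord (m : mi r) (X : 'I_r -> int -> C) (jt : 'I_r * nat) : C :=
  X jt.1 (m jt.1 - (jt.2)%:Z - 1).

Lemma sum_Tcoord_Tmat (n m : mi r) (X : 'I_r -> int -> C) (b : 'I_(Tsize n m)) :
    inC2r n m -> (forall j, in_span (- n j) (m j - 1) (X j)) ->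
  \sum_(a < Tsize n m) Tcoord m X (nth (x0, 0%N) (Tindex n m) a) * Tmat c n m a b =
  Lvec c n m (fun j => - n j) X (msum m - (b : nat)%:Z - 1).
Proof.
move=> nm sp; under eq_bigr do rewrite (TmatE c x0) //.
transitivity (\sum_(jt <- Tindex n m) Tcoord m X jt * Trow c m jt (- msum m + (b : nat)%:Z)).
  by rewrite (big_nth (x0, 0%N)) size_Tindex // big_mkord.
rewrite /Lvec /Tindex big_flatten /= big_map big_enum /=; apply: eq_bigr => j _.
rewrite big_map LwinE.
transitivity (\sum_(i <- [seq m j - t%:Z - 1 | t <- iota 0 (absz (n j + m j))])
                X j i * c (msum m - (b : nat)%:Z - 1 - i) j).
  by rewrite big_map; apply: eq_bigr => t _; rewrite /Tcoord /Trow /=; congr (_ * c _ _); lia.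
apply: big_support_eq; rewrite ?uniq_zwin ?map_inj_uniq ?iota_uniq //;
  [by move=> x y; lia | |] => i; rewrite mulf_eq0 negb_or => /andP[/(in_span_bounds (sp j)) ? _].
  by apply/mapP; exists (absz (m j - 1 - i)%R); rewrite ?mem_iota; move: (nm j); lia.
by rewrite mem_zwin; move: (nm j); lia.
Qed.

Lemma normal_annihilated_vec_eq0 (n m : mi r) (X : 'I_r -> int -> C) :
    inC2r n m -> normal c n m -> (forall j, in_span (- n j) (m j - 1) (X j)) ->
    (forall k, - msum n <= k <= msum m - 1 -> Lvec c n m (fun j => - n j) X k = 0) ->
  forall j i, X j i = 0.
Proof.
move=> nm /Tmat_unit unitT sp orth.
pose w : 'rV[C]_(Tsize n m) := \row_a Tcoord m X (nth (x0, 0%N) (Tindex n m) a).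
have wT : w *m Tmat c n m = 0.
  apply/matrixP => i0 b; rewrite !mxE; under eq_bigr do rewrite mxE.
  by rewrite sum_Tcoord_Tmat // orth //; have := TsizeE nm; have := ltn_ord b; lia.
have w0 : w = 0 by rewrite -(mulmxK unitT w) wT mul0mx.
move=> j; apply: in_span_eq0 (sp j) _ => i /andP[lo hi].
have jt_in : (j, absz (m j - 1 - i)%R) \in Tindex n m.
  by rewrite mem_Tindex; move: (nm j); lia.
have lt_a : (index (j, absz (m j - 1 - i)%R) (Tindex n m) < Tsize n m)%N.
  by rewrite -size_Tindex // index_mem.
have := congr1 (fun M : 'rV_(Tsize n m) => M 0 (Ordinal lt_a)) w0.
rewrite !mxE /= nth_index //= /Tcoord /=.
by have -> : m j - (absz (m j - 1 - i)%R)%:Z - 1 = i by lia.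
Qed.

End Kernels.

Section PhiRecurrence.
Variables (R : realType) (r : nat) (c : coefs R r).
Local Notation C := (R[i]).

Lemma Lwin_Phi_eq0 (n m : mi r) P a len j k :
    inC2r n m -> is_Phi c n m P -> a <= - msum m -> msum n < a + len%:Z ->
  - m j <= k <= n j - 1 -> Lwin c j a len P k = 0.
Proof.
move=> nm [sp _ orth] *; have T_eq := TsizeE nm.
by rewrite (Lwin_window (a' := - msum m) (len' := (Tsize n m).+1) c j k sp) ?orth //; lia.
Qed.

Lemma Lwin_Phistar_eq0 (n m : mi r) P a len j k :
    inC2r n m -> is_Phistar c n m P -> a <= - msum m -> msum n < a + len%:Z ->
  - m j + 1 <= k <= n j -> Lwin c j a len P k = 0.
Proof.
move=> nm [sp _ orth] *; have T_eq := TsizeE nm.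
by rewrite (Lwin_window (a' := - msum m) (len' := (Tsize n m).+1) c j k sp) ?orth //; lia.
Qed.

Lemma Phi_madd_ev_diff (n m : mi r) (k l : 'I_r) (P0 Pk Pl : int -> C) :
    inC2r n m -> inC2r (madd n (ev k)) m -> inC2r (madd n (ev l)) m -> normal c n m ->
    is_Phi c n m P0 -> is_Phi c (madd n (ev k)) m Pk -> is_Phi c (madd n (ev l)) m Pl ->
  forall i, Pk i - Pl i = (Pk (msum n) - Pl (msum n)) * P0 i.
Proof.
move=> nm nmk nml nN Phi0 Phik Phil.
have [sp0 top0 _] := Phi0; have [spk topk _] := Phik; have [spl topl _] := Phil.
rewrite msum_madd_ev in spk topk; rewrite msum_madd_ev in spl topl.
set g := Pk (msum n) - Pl (msum n).
pose Q i := Pk i - Pl i - g * P0 i.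
have spQ : in_span (- msum m) (msum n - 1) Q.
  move=> i i_out.
  have [->|[->|out]] : i = msum n \/ i = msum n + 1 \/ i < - msum m \/ msum n + 1 < i.
  - by lia.
  - by rewrite /Q top0 mulr1 subrr.
  - by rewrite /Q topk topl sp0 ?mulr0 ?subrr ?subr0 //; lia.
  - by rewrite /Q spk ?spl ?sp0 ?mulr0 ?subr0 //; lia.
have orthQ j kk : - m j <= kk <= n j - 1 -> Lwin c j (- msum m) (Tsize n m) Q kk = 0.
  move=> kk_in; have T_eq := TsizeE nm; have evk := ev_bounds k j; have evl := ev_bounds l j.
  rewrite (Lwin_window (a' := - msum m) (len' := (Tsize n m).+2) c j kk spQ)
    1?Lwin_lincomb; try lia.
  rewrite (Lwin_Phi_eq0 nmk Phik) ?(Lwin_Phi_eq0 nml Phil) ?(Lwin_Phi_eq0 nm Phi0)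
    ?mulr0 ?subrr // ?msum_madd_ev /madd; lia.
by move=> i; apply/subr0_eq/(normal_annihilated_poly_eq0 k nm nN spQ orthQ).
Qed.

Lemma Phistar_madd_ev_diff (n m : mi r) (k l : 'I_r) (P0 Pk Pl : int -> C) :
    inC2r n m -> inC2r n (madd m (ev k)) -> inC2r n (madd m (ev l)) -> normal c n m ->
    is_Phistar c n m P0 -> is_Phistar c n (madd m (ev k)) Pk ->
    is_Phistar c n (madd m (ev l)) Pl ->
  forall i, Pk i - Pl i = (Pk (- msum m) - Pl (- msum m)) * P0 i.
Proof.
move=> nm nmk nml nN Phi0 Phik Phil.
have [sp0 bot0 _] := Phi0; have [spk botk _] := Phik; have [spl botl _] := Phil.
rewrite msum_madd_ev in spk botk; rewrite msum_madd_ev in spl botl.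
set g := Pk (- msum m) - Pl (- msum m).
pose Q i := Pk i - Pl i - g * P0 i.
have spQ : in_span (- msum m + 1) (msum n) Q.
  move=> i i_out.
  have [->|[->|out]] : i = - msum m \/ i = - (msum m + 1) \/ i < - (msum m + 1) \/ msum n < i.
  - by lia.
  - by rewrite /Q bot0 mulr1 subrr.
  - by rewrite /Q botk botl sp0 ?mulr0 ?subrr ?subr0 //; lia.
  - by rewrite /Q spk ?spl ?sp0 ?mulr0 ?subr0 //; lia.
have spQ' : in_span (- msum m) (msum n - 1) (fun i => Q (i + 1)).
  by apply: (in_span_widen _ _ (in_span_shift spQ)); lia.
have orthQ j kk : - m j <= kk <= n j - 1 ->
    Lwin c j (- msum m) (Tsize n m) (fun i => Q (i + 1)) kk = 0.
  move=> kk_in; have T_eq := TsizeE nm; have evk := ev_bounds k j; have evl := ev_bounds l j.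
  rewrite Lwin_shift (Lwin_window (a' := - msum m - 1) (len' := (Tsize n m).+2) c j (kk + 1) spQ)
    1?Lwin_lincomb; try lia.
  rewrite (Lwin_Phistar_eq0 nmk Phik) ?(Lwin_Phistar_eq0 nml Phil)
    ?(Lwin_Phistar_eq0 nm Phi0) ?mulr0 ?subrr // ?msum_madd_ev /madd; lia.
move=> i; apply/subr0_eq; rewrite -(subrK 1 i).
exact: (normal_annihilated_poly_eq0 k nm nN spQ' orthQ).
Qed.

End PhiRecurrence.

Section XiRecurrence.
Variables (R : realType) (r : nat) (c : coefs R r).
Local Notation C := (R[i]).

(* The double sum of P_i X_j(s) c_{-1-i-s,j} vanishes by the orthogonality of Phi,
   while summing over s first leaves only the terms i = |n| - 1 and i = |n|. *)
Lemma Lvec_Xi_Phi (n m : mi r) (P : int -> C) X :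
    inC2r n m -> ~ (forall j, n j + m j = 0) -> is_Phi c n m P -> is_Xi c n m X ->
  Lvec c n m (fun j => - n j) X (- msum n - 1) = - P (msum n - 1).
Proof.
move=> nm nd [spP topP orthP] [_ /(_ nd) [_ zX oneX]]; have T_eq := TsizeE nm.
have := sum_mul_Lvec c P (- msum m) (Tsize n m).+1 n m (fun j => - n j) X (-1).
rewrite [RHS]big1 => [|j _]; last first.
  rewrite big1_seq // => s /andP[_]; rewrite mem_zwin gez0_abs ?nm // => s_in.
  by rewrite orthP ?mulr0 //; apply/andP; split; lia.
rewrite (@big_support_eq _ _ _ [:: msum n - 1; msum n]) ?uniq_zwin //; first last.
- move=> i; rewrite mulf_eq0 negb_or => /andP[/(in_span_bounds spP) i_in].
  rewrite !inE; apply: contraR => i_out; rewrite zX //; apply/andP; split;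
    by move: i_out; case: eqP; case: eqP => //=; lia.
- move=> i; rewrite mulf_eq0 negb_or => /andP[/(in_span_bounds spP) ? _].
  by rewrite mem_zwin; lia.
- by rewrite /= inE andbT; apply/negP => /eqP; lia.
rewrite !big_cons big_nil topP (_ : -1 - (msum n - 1) = - msum n) ?oneX; last lia.
rewrite (_ : -1 - msum n = - msum n - 1); last lia.
by rewrite mulr1 mul1r addr0 addrC => /eqP; rewrite addr_eq0 => /eqP.
Qed.

Lemma Lvec_Xistar_Phistar (n m : mi r) (P : int -> C) X :
    inC2r n m -> ~ (forall j, n j + m j = 0) -> is_Phistar c n m P -> is_Xistar c n m X ->
  Lvec c n m (fun j => - n j + 1) X (msum m + 1) = - P (1 - msum m).
Proof.
move=> nm nd [spP botP orthP] [_ /(_ nd) [_ zX oneX]]; have T_eq := TsizeE nm.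
have := sum_mul_Lvec c P (- msum m) (Tsize n m).+1 n m (fun j => - n j + 1) X 1.
rewrite [RHS]big1 => [|j _]; last first.
  rewrite big1_seq // => s /andP[_]; rewrite mem_zwin gez0_abs ?nm // => s_in.
  by rewrite orthP ?mulr0 //; apply/andP; split; lia.
rewrite (@big_support_eq _ _ _ [:: - msum m; 1 - msum m]) ?uniq_zwin //; first last.
- move=> i; rewrite mulf_eq0 negb_or => /andP[/(in_span_bounds spP) i_in].
  rewrite !inE; apply: contraR => i_out; rewrite zX //; apply/andP; split;
    by move: i_out; case: eqP; case: eqP => //=; lia.
- move=> i; rewrite mulf_eq0 negb_or => /andP[/(in_span_bounds spP) ? _].
  by rewrite mem_zwin; lia.
- by rewrite /= inE andbT; apply/negP => /eqP; lia.
rewrite !big_cons big_nil botP (_ : 1 - (1 - msum m) = msum m) ?oneX; last lia.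
rewrite (_ : 1 - - msum m = msum m + 1); last lia.
by rewrite mulr1 mul1r addr0 => /eqP; rewrite addr_eq0 => /eqP.
Qed.

Lemma Lvec_Xi_widen (n n' m : mi r) (X : 'I_r -> int -> C) k :
    inC2r n' m -> (forall j, n' j <= n j) -> (forall j, in_span (- n' j) (m j - 1) (X j)) ->
  Lvec c n m (fun j => - n j) X k = Lvec c n' m (fun j => - n' j) X k.
Proof.
move=> nm' le_n sp; apply: (Lvec_window _ _ sp) => j; move: (nm' j) (le_n j); lia.
Qed.

Lemma Lvec_Xistar_widen (n m m' : mi r) (X : 'I_r -> int -> C) k :
    inC2r n m' -> (forall j, m' j <= m j) -> (forall j, in_span (- n j + 1) (m' j) (X j)) ->
  Lvec c n m (fun j => - n j + 1) X k = Lvec c n m' (fun j => - n j + 1) X k.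
Proof.
move=> nm' le_m sp; apply: (Lvec_window _ _ sp) => j; move: (nm' j) (le_m j); lia.
Qed.

Lemma Xi_msub_ev_diff (x0 : 'I_r) (n m : mi r) (k l : 'I_r) P0 Pk Pl Xk Xl X g :
  k != l ->
  let N := msub (msub n (ev k)) (ev l) in
    inC2r N m -> inC2r (msub n (ev k)) m -> inC2r (msub n (ev l)) m -> inC2r n m ->
    normal c n m ->
    is_Phi c N m P0 -> is_Phi c (madd N (ev k)) m Pk -> is_Phi c (madd N (ev l)) m Pl ->
    is_Xi c (msub n (ev k)) m Xk -> is_Xi c (msub n (ev l)) m Xl -> is_Xi c n m X ->
    (forall i, Pk i - Pl i = g * P0 i) ->
  forall j i, Xk j i - Xl j i = g * X j i.
Proof.
move=> kl N nmN nmk nml nm nN Phi0 Phik Phil Xik Xil Xi0 diffP.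
rewrite /N msub_ev2_madd_l in Phik; rewrite /N msub_ev2_madd_r in Phil.
have lk : (l == k) = false by rewrite eq_sym; apply/negbTE.
have [ndk ndl nd] : [/\ ~ (forall j, msub n (ev k) j + m j = 0),
    ~ (forall j, msub n (ev l) j + m j = 0) & ~ (forall j, n j + m j = 0)].
  by split=> [/(_ l) | /(_ k) | /(_ k)]; move: (nmN k) (nmN l);
    rewrite /N /msub /ev !eqxx lk (negPf kl); lia.
have size_ge2 : 2 <= msum n + msum m.
  by have := TsizeE nmN; rewrite /N !msum_msub_ev; lia.
have e1 : - (msum n - 1) - 1 = - msum n by lia.
have e2 : msum n - 1 - 1 = msum n - 2 by lia.
have g_val : Pk (msum n - 2) - Pl (msum n - 2) = g.
  by have [_ top0 _] := Phi0; have := diffP (msum N); rewrite top0 mulr1 /N !msum_msub_ev e2.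
have := Lvec_Xi_Phi nmk ndk Phil Xik; rewrite msum_msub_ev e1 e2 => dk.
have := Lvec_Xi_Phi nml ndl Phik Xil; rewrite msum_msub_ev e1 e2 => dl.
have [_ /(_ ndk) [spk zk onek]] := Xik; have [_ /(_ ndl) [spl zl onel]] := Xil.
have [_ /(_ nd) [sp z one]] := Xi0.
rewrite msum_msub_ev in zk onek; rewrite msum_msub_ev in zl onel.
have le_nk j : msub n (ev k) j <= n j by have := ev_bounds k j; rewrite /msub; lia.
have le_nl j : msub n (ev l) j <= n j by have := ev_bounds l j; rewrite /msub; lia.
pose Y j i := Xk j i - Xl j i - g * X j i.
have spY j : in_span (- n j) (m j - 1) (Y j).
  apply: in_span_lincomb;
    [apply: (in_span_widen _ _ (spk j)) | apply: (in_span_widen _ _ (spl j)) | exact: sp];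
    by move: (le_nk j) (le_nl j); lia.
have LY K : - msum n <= K <= msum m - 1 -> Lvec c n m (fun j => - n j) Y K = 0.
  move=> K_in; rewrite Lvec_lincomb.
  rewrite (Lvec_Xi_widen _ nmk le_nk spk) (Lvec_Xi_widen _ nml le_nl spl).
  have [->|[->|K_in']] : K = - msum n \/ K = - (msum n - 1) \/ - (msum n - 1) + 1 <= K by lia.
  - by rewrite dk dl one -g_val; ring.
  - by rewrite onek onel z ?mulr0 ?subrr //; apply/andP; split; lia.
  - by rewrite zk ?zl ?z ?mulr0 ?subrr //; apply/andP; split; lia.
move=> j i; apply/subr0_eq.
exact: (normal_annihilated_vec_eq0 x0 nm nN spY LY).
Qed.

Lemma Xistar_msub_ev_diff (x0 : 'I_r) (n m : mi r) (k l : 'I_r) P0 Pk Pl Xk Xl X g :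
  k != l ->
  let M := msub (msub m (ev k)) (ev l) in
    inC2r n M -> inC2r n (msub m (ev k)) -> inC2r n (msub m (ev l)) -> inC2r n m ->
    normal c n m ->
    is_Phistar c n M P0 -> is_Phistar c n (madd M (ev k)) Pk ->
    is_Phistar c n (madd M (ev l)) Pl ->
    is_Xistar c n (msub m (ev k)) Xk -> is_Xistar c n (msub m (ev l)) Xl ->
    is_Xistar c n m X ->
    (forall i, Pk i - Pl i = g * P0 i) ->
  forall j i, Xk j i - Xl j i = g * X j i.
Proof.
move=> kl M nmM nmk nml nm nN Phi0 Phik Phil Xik Xil Xi0 diffP.
rewrite /M msub_ev2_madd_l in Phik; rewrite /M msub_ev2_madd_r in Phil.
have lk : (l == k) = false by rewrite eq_sym; apply/negbTE.
have [ndk ndl nd] : [/\ ~ (forall j, n j + msub m (ev k) j = 0),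
    ~ (forall j, n j + msub m (ev l) j = 0) & ~ (forall j, n j + m j = 0)].
  by split=> [/(_ l) | /(_ k) | /(_ k)]; move: (nmM k) (nmM l);
    rewrite /M /msub /ev !eqxx lk (negPf kl); lia.
have size_ge2 : 2 <= msum n + msum m.
  by have := TsizeE nmM; rewrite /M !msum_msub_ev; lia.
have e1 : msum m - 1 + 1 = msum m by lia.
have e2 : 1 - (msum m - 1) = 2 - msum m by lia.
have g_val : Pk (2 - msum m) - Pl (2 - msum m) = g.
  have [_ bot0 _] := Phi0; have := diffP (- msum M).
  by rewrite bot0 mulr1 /M !msum_msub_ev (_ : - (msum m - 1 - 1) = 2 - msum m) //; lia.
have := Lvec_Xistar_Phistar nmk ndk Phil Xik; rewrite msum_msub_ev e1 e2 => dk.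
have := Lvec_Xistar_Phistar nml ndl Phik Xil; rewrite msum_msub_ev e1 e2 => dl.
have [_ /(_ ndk) [spk zk onek]] := Xik; have [_ /(_ ndl) [spl zl onel]] := Xil.
have [_ /(_ nd) [sp z one]] := Xi0.
rewrite msum_msub_ev in zk onek; rewrite msum_msub_ev in zl onel.
have le_mk j : msub m (ev k) j <= m j by have := ev_bounds k j; rewrite /msub; lia.
have le_ml j : msub m (ev l) j <= m j by have := ev_bounds l j; rewrite /msub; lia.
pose Y j i := Xk j i - Xl j i - g * X j i.
have spY j : in_span (- n j) (m j - 1) (fun i => Y j (i + 1)).
  have spY0 : in_span (- n j + 1) (m j) (Y j).
    apply: in_span_lincomb;
      [apply: (in_span_widen _ _ (spk j)) | apply: (in_span_widen _ _ (spl j)) | exact: sp];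
      by move: (le_mk j) (le_ml j); lia.
  by apply: (in_span_widen _ _ (in_span_shift spY0)); lia.
have LY K : - msum n <= K <= msum m - 1 ->
    Lvec c n m (fun j => - n j) (fun j i => Y j (i + 1)) K = 0.
  move=> K_in; rewrite Lvec_shift Lvec_lincomb.
  rewrite (Lvec_Xistar_widen _ nmk le_mk spk) (Lvec_Xistar_widen _ nml le_ml spl).
  have [->|[->|K_in']] : K + 1 = msum m \/ K + 1 = msum m - 1 \/ K + 1 <= msum m - 2 by lia.
  - by rewrite dk dl one -g_val; ring.
  - by rewrite onek onel z ?mulr0 ?subrr //; apply/andP; split; lia.
  - by rewrite zk ?zl ?z ?mulr0 ?subrr //; apply/andP; split; lia.
move=> j i; apply/subr0_eq; rewrite -(subrK 1 i).
exact: (normal_annihilated_vec_eq0 x0 nm nN spY LY).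
Qed.

End XiRecurrence.

Unset Implicit Arguments.

Theorem proposition6p1 (R : realType) (r : nat) (hr : (0 < r)%N)
    (c : coefs R r) (k l : 'I_r) (hkl : k != l) :
  (* (a) *)
  (forall n m : mi r,
     inC2r n m -> inC2r (madd n (ev k)) m -> inC2r (madd n (ev l)) m ->
     normal c n m -> normal c (madd n (ev k)) m -> normal c (madd n (ev l)) m ->
     forall P0 Pk Pl,
       is_Phi c n m P0 -> is_Phi c (madd n (ev k)) m Pk ->
       is_Phi c (madd n (ev l)) m Pl ->
       exists gamma : R[i], forall i, Pk i - Pl i = gamma * P0 i) /\
  (* (b) *)
  (forall n m : mi r,
     let N := msub (msub n (ev k)) (ev l) in
     inC2r N m -> inC2r (msub n (ev k)) m -> inC2r (msub n (ev l)) m ->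
     inC2r n m ->
     normal c N m -> normal c (msub n (ev k)) m -> normal c (msub n (ev l)) m ->
     normal c n m ->
     forall P0 Pk Pl Xk Xl X,
       is_Phi c N m P0 -> is_Phi c (madd N (ev k)) m Pk ->
       is_Phi c (madd N (ev l)) m Pl ->
       is_Xi c (msub n (ev k)) m Xk -> is_Xi c (msub n (ev l)) m Xl ->
       is_Xi c n m X ->
       forall gamma : R[i], (forall i, Pk i - Pl i = gamma * P0 i) ->
       forall j i, Xk j i - Xl j i = gamma * X j i) /\
  (* (c) *)
  (forall n m : mi r,
     inC2r n m -> inC2r n (madd m (ev k)) -> inC2r n (madd m (ev l)) ->
     normal c n m -> normal c n (madd m (ev k)) -> normal c n (madd m (ev l)) ->
     forall P0 Pk Pl,
       is_Phistar c n m P0 -> is_Phistar c n (madd m (ev k)) Pk ->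
       is_Phistar c n (madd m (ev l)) Pl ->
       exists eta : R[i], forall i, Pk i - Pl i = eta * P0 i) /\
  (* (d) *)
  (forall n m : mi r,
     let M := msub (msub m (ev k)) (ev l) in
     inC2r n M -> inC2r n (msub m (ev k)) -> inC2r n (msub m (ev l)) ->
     inC2r n m ->
     normal c n M -> normal c n (msub m (ev k)) -> normal c n (msub m (ev l)) ->
     normal c n m ->
     forall P0 Pk Pl Xk Xl X,
       is_Phistar c n M P0 -> is_Phistar c n (madd M (ev k)) Pk ->
       is_Phistar c n (madd M (ev l)) Pl ->
       is_Xistar c n (msub m (ev k)) Xk -> is_Xistar c n (msub m (ev l)) Xl ->
       is_Xistar c n m X ->
       forall eta : R[i], (forall i, Pk i - Pl i = eta * P0 i) ->
       forall j i, Xk j i - Xl j i = eta * X j i).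
Proof.
split; [|split; [|split]].
- move=> n m nm nmk nml nN _ _ P0 Pk Pl Phi0 Phik Phil.
  by exists (Pk (msum n) - Pl (msum n)); apply: Phi_madd_ev_diff Phi0 Phik Phil.
- move=> n m N nmN nmk nml nm _ _ _ nN P0 Pk Pl Xk Xl X Phi0 Phik Phil Xik Xil Xi0 g.
  exact: (Xi_msub_ev_diff k hkl nmN nmk nml nm nN Phi0 Phik Phil Xik Xil Xi0).
- move=> n m nm nmk nml nN _ _ P0 Pk Pl Phi0 Phik Phil.
  by exists (Pk (- msum m) - Pl (- msum m)); apply: Phistar_madd_ev_diff Phi0 Phik Phil.
- move=> n m M nmM nmk nml nm _ _ _ nN P0 Pk Pl Xk Xl X Phi0 Phik Phil Xik Xil Xi0 g.
  exact: (Xistar_msub_ev_diff k hkl nmM nmk nml nm nN Phi0 Phik Phil Xik Xil Xi0).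
Qed.
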